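(* Let $X,Y$ be metric spaces and $f,g:X\to Y$ be 1-Lipschitz maps. For any two Borel probability measures $\mu,\nu$ on $X$, \[ |d_{\mathrm{KF}}^\mu(f,g)-d_{\mathrm{KF}}^\nu(f,g)|\le 2\,d_{\mathrm P}(\mu,\nu). \]
   Context: For a Borel probability measure $\mu$ on $X$ and maps $f,g:X\to Y$, $d_{\mathrm{KF}}^\mu(f,g):=\inf\{\varepsilon\ge0:\mu(\{x: d_Y(f(x),g(x))>\varepsilon\})\le\varepsilon\}$. $d_{\mathrm P}$ is the Prohorov metric: $d_{\mathrm P}(\mu,\nu):=\inf\{\varepsilon>0:\mu(U_\varepsilon(A))\ge\nu(A)-\varepsilon\ \forall\text{ Borel }A\subset X\}$, $U_\varepsilon(A)$ the open $\varepsilon$-neighborhood. *)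

From HB Require Import structures.
From mathcomp Require Import all_boot all_order all_algebra.
From mathcomp Require Import all_classical all_reals all_analysis.
Set Implicit Arguments. Unset Strict Implicit. Unset Printing Implicit Defensive.
Import Order.TTheory GRing.Theory Num.Theory.
Local Open Scope classical_set_scope.
Local Open Scope ring_scope.

Definition is_metric (R : realType) (T : Type) (dist : T -> T -> R) : Prop :=
  [/\ forall x y, dist x y = 0 <-> x = y,
      forall x y, dist x y = dist y x &
      forall x y z, dist x z <= dist x y + dist y z].

Definition metric_open (R : realType) (T : Type) (dist : T -> T -> R)
  (U : set T) : Prop :=
  forall x, U x -> exists2 r : R, 0 < r & forall y, dist x y < r -> U y.

Definition is_borel (R : realType) d (T : measurableType d)
  (dist : T -> T -> R) : Prop :=
  (@measurable d T) = <<s [set U : set T | metric_open dist U] >>.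

Definition lipschitz1 (R : realType) (X Y : Type) (dX : X -> X -> R)
  (dY : Y -> Y -> R) (f : X -> Y) : Prop :=
  forall x x', dY (f x) (f x') <= dX x x'.

Definition open_nbhd (R : realType) (T : Type) (dist : T -> T -> R)
  (eps : R) (A : set T) : set T :=
  [set x | exists2 a, A a & dist x a < eps].

Definition ky_fan (R : realType) d (X : measurableType d) (Y : Type)
  (dY : Y -> Y -> R) (mu : probability X R) (f g : X -> Y) : R :=
  inf [set eps : R | 0 <= eps /\
        (mu [set x | (eps < dY (f x) (g x))%R] <= eps%:E)%E].

Definition prohorov (R : realType) d (X : measurableType d)
  (dX : X -> X -> R) (mu nu : probability X R) : R :=
  inf [set eps : R | 0 < eps /\
        forall A : set X, measurable A ->
          (nu A - eps%:E <= mu (open_nbhd dX eps A))%E].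

From HB Require Import structures.
From mathcomp Require Import all_boot all_order all_algebra.
From mathcomp Require Import all_classical all_reals all_analysis.
From mathcomp Require Import lra.
Set Implicit Arguments. Unset Strict Implicit. Unset Printing Implicit Defensive.
Import Order.TTheory GRing.Theory Num.Theory.
Local Open Scope classical_set_scope.
Local Open Scope ring_scope.

(* The discrepancy D x := dY (f x) (g x) is 2-Lipschitz, so the
   eps-neighbourhood of {D > eta + 2 eps} lies inside {D > eta}.  If eps is
   admissible for the Prohorov distance of mu and nu (a condition symmetric in
   the two measures), then mu {D > eta + 2 eps} <= nu {D > eta} + eps; hence
   every eta admissible for d_KF^nu makes eta + 2 eps admissible for d_KF^mu.
   Taking infima, d_KF^mu <= d_KF^nu + 2 d_P(mu, nu), and symmetrically. *)

Lemma inf_le_addrM (R : realType) (S T U : set R) (k : R) :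
  0 < k -> nonempty S -> nonempty T -> has_lbound U ->
  (forall s t, S s -> T t -> U (s + k * t)) -> inf U <= inf S + k * inf T.
Proof.
move=> k_gt0 S0 T0 U_lb STU.
rewrite -lerBlDl -ler_pdivrMl //; apply: lb_le_inf => // t Tt.
rewrite ler_pdivrMl // lerBlDl addrC -lerBlDl.
apply: lb_le_inf => // s Ss; rewrite lerBlDl addrC.
exact: ge_inf U_lb _ (STU s t Ss Tt).
Qed.

Lemma finite_measure_EFin {R : realType} {d} {T : measurableType d}
  (P : {finite_measure set T -> \bar R}) {A : set T} :
  measurable A -> exists r : R, P A = r%:E.
Proof. by move=> mA; exists (fine (P A)); rewrite fineK // fin_num_measure. Qed.

Section MetricBorel.
Variables (R : realType) (d : measure_display) (X : measurableType d).
Variables (dX : X -> X -> R) (hX : is_metric dX) (hB : is_borel dX).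

Definition nbhd_dominated (P Q : probability X R) (eps : R) : Prop :=
  forall A, measurable A -> (P A <= Q (open_nbhd dX eps A) + eps%:E)%E.

Lemma metric_open_measurable (U : set X) : metric_open dX U -> measurable U.
Proof. by move=> oU; rewrite hB; exact: sub_gen_smallest. Qed.

Lemma metric_open_nbhd eps A : metric_open dX (open_nbhd dX eps A).
Proof.
case: hX => _ dXC dX_tri x [a Aa xa].
exists (eps - dX x a); first by rewrite subr_gt0.
move=> y xy; exists a => //.
by have := dX_tri y x a; rewrite (dXC y x); lra.
Qed.

Lemma measurable_open_nbhd eps A : measurable (open_nbhd dX eps A).
Proof. exact/metric_open_measurable/metric_open_nbhd. Qed.

(* Apply the hypothesis to the complement of U_eps(A), whose eps-neighbourhood
   misses A. *)
Lemma nbhd_dominated_sym (P Q : probability X R) eps :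
  nbhd_dominated P Q eps -> nbhd_dominated Q P eps.
Proof.
move=> PQ A mA; case: hX => _ dXC _.
set UA := open_nbhd dX eps A.
have mCUA : measurable (~` UA) := measurableC (measurable_open_nbhd eps A).
have UCUA_CA : open_nbhd dX eps (~` UA) `<=` ~` A.
  by move=> x [y UAy xy] Ax; apply: UAy; exists x; rewrite // dXC.
have := PQ _ mCUA; rewrite (probability_setC P); last exact: measurable_open_nbhd.
have : (Q (open_nbhd dX eps (~` UA)) <= Q (~` A))%E.
  exact: le_measure (mem_set (measurable_open_nbhd _ _)) (mem_set (measurableC mA)) _.
rewrite probability_setC //.
have [a ->] := finite_measure_EFin Q mA.
have [b ->] := finite_measure_EFin P (measurable_open_nbhd eps A).
have [c ->] := finite_measure_EFin Q (measurable_open_nbhd eps (~` UA)).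
by rewrite -!EFinB -!EFinD !lee_fin; lra.
Qed.

Section LipschitzPair.
Variables (Y : Type) (dY : Y -> Y -> R) (hY : is_metric dY) (f g : X -> Y).
Variables (hf : lipschitz1 dX dY f) (hg : lipschitz1 dX dY g).

Definition ky_fan_set (P : probability X R) : set R :=
  [set eta : R | 0 <= eta /\
                 (P [set x | (eta < dY (f x) (g x))%R] <= eta%:E)%E].

Lemma dist_lipschitz2 x y : dY (f x) (g x) <= dY (f y) (g y) + 2 * dX x y.
Proof.
case: hY => _ dYC dY_tri; case: hX => _ dXC _.
have := dY_tri (f x) (f y) (g x); have := dY_tri (f y) (g y) (g x).
have := hf x y; have := hg y x.
by rewrite (dYC (g y)) (dXC y); lra.
Qed.

Lemma measurable_dist_gt t : measurable [set x | t < dY (f x) (g x)].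
Proof.
apply: metric_open_measurable => x /= tx.
exists ((dY (f x) (g x) - t) / 2); first by rewrite divr_gt0 // subr_gt0.
by move=> y xy; have := dist_lipschitz2 x y; lra.
Qed.

Lemma ky_fan_set_nbhd (P Q : probability X R) (eta eps : R) :
  0 <= eps -> nbhd_dominated P Q eps ->
  ky_fan_set Q eta -> ky_fan_set P (eta + 2 * eps).
Proof.
move=> eps_ge0 PQ [eta_ge0 Qeta]; split; first lra.
case: hX => _ dXC _.
set A := [set x | eta + 2 * eps < dY (f x) (g x)].
have mA : measurable A := measurable_dist_gt _.
have UA_sub : open_nbhd dX eps A `<=` [set x | eta < dY (f x) (g x)].
  move=> y [a Aa ya]; rewrite /A /= in Aa *.
  by have := dist_lipschitz2 a y; rewrite dXC; lra.
have : (Q (open_nbhd dX eps A) <= Q [set x | (eta < dY (f x) (g x))%R])%E.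
  exact: le_measure (mem_set (measurable_open_nbhd _ _))
    (mem_set (measurable_dist_gt _)) UA_sub.
have := PQ _ mA; move: Qeta.
have [a ->] := finite_measure_EFin P mA.
have [b ->] := finite_measure_EFin Q (measurable_open_nbhd eps A).
have [c ->] := finite_measure_EFin Q (measurable_dist_gt eta).
by rewrite -!EFinD !lee_fin; lra.
Qed.

Lemma ky_fan_le_prohorov (mu nu P Q : probability X R) :
  (forall eps, 0 < eps ->
     (forall A, measurable A -> (nu A - eps%:E <= mu (open_nbhd dX eps A))%E) ->
     nbhd_dominated P Q eps) ->
  ky_fan dY P f g <= ky_fan dY Q f g + 2 * prohorov dX mu nu.
Proof.
move=> PQ; apply: inf_le_addrM => //.
- by exists 1; split; [exact: ler01 | exact: probability_le1 (measurable_dist_gt _)].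
- exists 1; split => [|A mA]; first exact: ltr01.
  rewrite leeBlDr //.
  exact: le_trans (probability_le1 nu mA) (leeDr _ (measure_ge0 _ _)).
- by exists 0 => x [].
- move=> eta eps Qeta [eps_gt0 mu_nu].
  exact: ky_fan_set_nbhd (ltW eps_gt0) (PQ _ eps_gt0 mu_nu) Qeta.
Qed.

End LipschitzPair.
End MetricBorel.

Theorem lemma5p6 (R : realType) (d : measure_display) (X : measurableType d)
  (Y : Type) (dX : X -> X -> R) (dY : Y -> Y -> R)
  (hX : is_metric dX) (hY : is_metric dY) (hB : is_borel dX)
  (f g : X -> Y) (hf : lipschitz1 dX dY f) (hg : lipschitz1 dX dY g)
  (mu nu : probability X R) :
  `| ky_fan dY mu f g - ky_fan dY nu f g | <= 2 * prohorov dX mu nu.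
Proof.
have nu_mu eps : (forall A, measurable A ->
    (nu A - eps%:E <= mu (open_nbhd dX eps A))%E) -> nbhd_dominated dX nu mu eps.
  by move=> H A mA; rewrite -leeBlDr // H.
have le_mu := ky_fan_le_prohorov hX hB hY hf hg
  (fun eps _ H => nbhd_dominated_sym hX hB (nu_mu eps H)).
have le_nu := ky_fan_le_prohorov hX hB hY hf hg (fun eps _ => nu_mu eps).
by rewrite ler_norml; apply/andP; split; lra.
Qed.
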